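(* The initial algebra of the endofunctor $F=M\otimes-$ on $\mathbf{Met_3}^{C}$ is $(G_\rho,g)$, where $G_\rho$ is the carrier $G$ of the initial $F$-algebra $(G,g)$ in $\mathbf{Set_3}$ equipped with the discrete metric, and $g\colon M\otimes G_\rho\to G_\rho$ is the same structure map as in $\mathbf{Set_3}$. Moreover, for every $F$-algebra $(A,\alpha)$ in $\mathbf{Met_3}^{C}$, the algebra morphisms $G_\rho\to A$ in $\mathbf{Met_3}^{C}$ are exactly the algebra morphisms $G\to A$ in $\mathbf{Set_3}$.
   Context: A tripointed set is a set with three distinct distinguished points $T,L,R$; $\mathbf{Set_3}$ is the category of tripointed sets with maps preserving $T,L,R$. A tripointed metric space is a tripointed set with a metric bounded by $1$ in which $T,L,R$ have pairwise distance $1$; $\mathbf{Met_3}^{C}$ has these as objects and continuous maps preserving $T,L,R$ as morphisms. Let $M=\{a,b,c\}$. $F=M\otimes-$: $M\otimes X$ is the quotient of $M\times X$ by the equivalence relation generated by $(b,T)\sim(a,L)$, $(a,R)\sim(c,T)$, $(c,L)\sim(b,R)$, elements written $m\otimes x$, distinguished points $a\otimes T$, $b\otimes L$, $c\otimes R$, and $(M\otimes f)(m\otimes x)=m\otimes f(x)$; in the metric setting $M\times X$ has metric $\tfrac12 d(x,y)$ within a copy and $1$ between different copies, and $M\otimes X$ has the quotient metric. An $F$-algebra is a pair $(A,\alpha\colon FA\to A)$; an algebra morphism $h\colon(A,\alpha)\to(B,\beta)$ satisfies $h\circ\alpha=\beta\circ Fh$. Concretely, $G$ consists of expressions $m_0\otimes\cdots\otimes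 m_{n-1}\otimes z$ ($n\ge0$, $m_i\in M$, $z\in\{T,L,R\}$), taken modulo the identifications induced by the relations above and by $T=a\otimes T$, $L=b\otimes L$, $R=c\otimes R$ (i.e. $G$ is the colimit in $\mathbf{Set_3}$ of $I\to FI\to F^2I\to\cdots$ with $I=\{T,L,R\}$), and $g(m\otimes w)=m\otimes w$. The discrete metric is $d(x,y)=1$ for $x\ne y$. *)

From Stdlib Require Import Reals Relations ClassicalEpsilon.
From Coquelicot Require Import Rbar Lub.
Open Scope R_scope.

Inductive Mlab : Type := ma | mb | mc.

Lemma Mlab_eq_dec : forall x y : Mlab, {x = y} + {x <> y}.
Proof. decide equality. Defined.

Record TSet := {
  car :> Type;
  ptT : car; ptL : car; ptR : car;
  dTL : ptT <> ptL; dLR : ptL <> ptR; dTR : ptT <> ptR }.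

Definition pres (X Y : TSet) (h : X -> Y) : Prop :=
  h (ptT X) = ptT Y /\ h (ptL X) = ptL Y /\ h (ptR X) = ptR Y.

(* Generating relation of M (x) X: (b,T)~(a,L), (a,R)~(c,T), (c,L)~(b,R). *)
Inductive tbase (X : TSet) : Mlab * X -> Mlab * X -> Prop :=
| tb1 : tbase X (mb, ptT X) (ma, ptL X)
| tb2 : tbase X (ma, ptR X) (mc, ptT X)
| tb3 : tbase X (mc, ptL X) (mb, ptR X).

Definition teqv (X : TSet) : Mlab * X -> Mlab * X -> Prop :=
  clos_refl_sym_trans _ (tbase X).

Definition tens (X : TSet) : Type :=
  { S : Mlab * X -> Prop | exists p, S = teqv X p }.

Definition tcls (X : TSet) (p : Mlab * X) : tens X :=
  exist _ (teqv X p) (ex_intro _ p eq_refl).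

Definition trep (X : TSet) (s : tens X) : Mlab * X :=
  proj1_sig (constructive_indefinite_description _ (proj2_sig s)).

Definition tmap (X Y : TSet) (f : X -> Y) (s : tens X) : tens Y :=
  tcls Y (fst (trep X s), f (snd (trep X s))).

(* Distinguished points of M (x) X are a(x)T, b(x)L, c(x)R; an algebra
   structure map in Set_3 must preserve them. *)
Definition set3_alg (A : TSet) (alpha : tens A -> A) : Prop :=
  alpha (tcls A (ma, ptT A)) = ptT A /\
  alpha (tcls A (mb, ptL A)) = ptL A /\
  alpha (tcls A (mc, ptR A)) = ptR A.

Definition set3_hom (A : TSet) (alpha : tens A -> A)
  (B : TSet) (beta : tens B -> B) (h : A -> B) : Prop :=
  pres A B h /\ (forall s, h (alpha s) = beta (tmap A B h s)).

Definition set3_initial (G : TSet) (g : tens G -> G) : Prop :=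
  set3_alg G g /\
  forall (A : TSet) (alpha : tens A -> A), set3_alg A alpha ->
    exists! h : G -> A, set3_hom G g A alpha h.

Definition is_tmet (X : TSet) (d : X -> X -> R) : Prop :=
  (forall x y, d x y = 0 <-> x = y) /\
  (forall x y, d x y = d y x) /\
  (forall x y z, d x z <= d x y + d y z) /\
  (forall x y, d x y <= 1) /\
  d (ptT X) (ptL X) = 1 /\ d (ptL X) (ptR X) = 1 /\ d (ptT X) (ptR X) = 1.

Definition dprod (X : TSet) (d : X -> X -> R) (p q : Mlab * X) : R :=
  if Mlab_eq_dec (fst p) (fst q) then d (snd p) (snd q) / 2 else 1.

Inductive chain (X : TSet) (d : X -> X -> R) : Mlab * X -> Mlab * X -> R -> Prop :=
| ch_one : forall p q, chain X d p q (dprod X d p q)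
| ch_cons : forall p q p' q' r,
    teqv X q p' -> chain X d p' q' r -> chain X d p q' (dprod X d p q + r).

Definition qdist (X : TSet) (d : X -> X -> R) (s t : tens X) : R :=
  real (Glb_Rbar (fun r => exists p q,
          proj1_sig s p /\ proj1_sig t q /\ chain X d p q r)).

Definition mcont {X Y : Type} (dX : X -> X -> R) (dY : Y -> Y -> R)
  (f : X -> Y) : Prop :=
  forall x eps, 0 < eps -> exists delta, 0 < delta /\
    forall y, dX x y < delta -> dY (f x) (f y) < eps.

Definition met3_alg (A : TSet) (dA : A -> A -> R) (alpha : tens A -> A) : Prop :=
  is_tmet A dA /\ set3_alg A alpha /\ mcont (qdist A dA) dA alpha.

Definition met3_hom (A : TSet) (dA : A -> A -> R) (alpha : tens A -> A)
  (B : TSet) (dB : B -> B -> R) (beta : tens B -> B) (h : A -> B) : Prop :=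
  set3_hom A alpha B beta h /\ mcont dA dB h.

Definition met3_initial (G : TSet) (dG : G -> G -> R) (g : tens G -> G) : Prop :=
  met3_alg G dG g /\
  forall (A : TSet) (dA : A -> A -> R) (alpha : tens A -> A),
    met3_alg A dA alpha ->
    exists! h : G -> A, met3_hom G dG g A dA alpha h.

Definition ddisc (X : Type) (x y : X) : R :=
  if excluded_middle_informative (x = y) then 0 else 1.

From Stdlib Require Import Reals.
From Stdlib Require Import Lra Relations FunctionalExtensionality PropExtensionality ProofIrrelevance ClassicalEpsilon.
From Coquelicot Require Import Rbar Lub.
Open Scope R_scope.

(* With the discrete metric on X, every link of a chain in M x X either joins
   two equal points or has length at least 1/2.  So a chain of length < 1/2
   only passes through glued points, its ends are identified in M (x) X, and
   the quotient metric on M (x) X is again uniformly discrete.  Every map out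
   of a uniformly discrete space is continuous, so continuity is automatic
   both for the structure map and for all algebra morphisms out of G; hence
   the Met_3^C-morphisms out of G are the Set_3-morphisms and initiality
   transfers. *)

Lemma ddisc_cases (X : Type) (x y : X) :
  (ddisc X x y = 0 /\ x = y) \/ (ddisc X x y = 1 /\ x <> y).
Proof. unfold ddisc; destruct (excluded_middle_informative (x = y)); auto. Qed.

Lemma ddisc_neq (X : Type) (x y : X) : x <> y -> ddisc X x y = 1.
Proof. intro hxy; destruct (ddisc_cases X x y) as [[_ e] | [d _]]; tauto. Qed.

Lemma is_tmet_ddisc (X : TSet) : is_tmet X (ddisc X).
Proof.
  split; [| split; [| split; [| split; [| split; [| split]]]]].
  - intros x y; destruct (ddisc_cases X x y) as [[d e] | [d e]]; split; intro; auto; first [lra | tauto].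
  - intros x y; destruct (classic (x = y)) as [-> | hxy]; [reflexivity |].
    rewrite !ddisc_neq; auto.
  - intros x y z.
    destruct (ddisc_cases X x z) as [[d1 e1] | [d1 e1]],
             (ddisc_cases X x y) as [[d2 e2] | [d2 e2]],
             (ddisc_cases X y z) as [[d3 e3] | [d3 e3]]; try lra.
    congruence.
  - intros x y; destruct (ddisc_cases X x y) as [[d _] | [d _]]; lra.
  - apply ddisc_neq, dTL.
  - apply ddisc_neq, dLR.
  - apply ddisc_neq, dTR.
Qed.

Lemma mcont_of_separated {X Y : Type} (dX : X -> X -> R) (dY : Y -> Y -> R)
  (f : X -> Y) (c : R) :
  0 < c -> (forall x y, x <> y -> c <= dX x y) -> (forall y, dY y y = 0) ->
  mcont dX dY f.
Proof.
  intros hc hsep hdY x eps heps; exists c; split; [exact hc |].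
  intros y hxy; destruct (classic (x = y)) as [<- | hne].
  - rewrite hdY; exact heps.
  - specialize (hsep x y hne); lra.
Qed.

Lemma mcont_ddisc {X Y : Type} (dY : Y -> Y -> R) (f : X -> Y) :
  (forall y, dY y y = 0) -> mcont (ddisc X) dY f.
Proof.
  intro hdY; apply mcont_of_separated with (c := 1); [lra | | exact hdY].
  intros x y hxy; rewrite ddisc_neq; [lra | exact hxy].
Qed.

Lemma dprod_ddisc_nonneg (X : TSet) (p q : Mlab * X) : 0 <= dprod X (ddisc X) p q.
Proof.
  unfold dprod; destruct (Mlab_eq_dec (fst p) (fst q)); [| lra].
  destruct (ddisc_cases X (snd p) (snd q)) as [[d _] | [d _]]; rewrite d; lra.
Qed.

Lemma dprod_ddisc_cases (X : TSet) (p q : Mlab * X) :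
  p = q \/ 1/2 <= dprod X (ddisc X) p q.
Proof.
  unfold dprod; destruct (Mlab_eq_dec (fst p) (fst q)) as [e | e]; [| right; lra].
  destruct (ddisc_cases X (snd p) (snd q)) as [[_ e'] | [d _]].
  - left; destruct p, q; simpl in *; congruence.
  - right; rewrite d; lra.
Qed.

Lemma chain_ddisc_nonneg (X : TSet) p q r : chain X (ddisc X) p q r -> 0 <= r.
Proof.
  induction 1; [apply dprod_ddisc_nonneg |].
  pose proof (dprod_ddisc_nonneg X p q); lra.
Qed.

Lemma chain_ddisc_short_teqv (X : TSet) p q r :
  chain X (ddisc X) p q r -> r < 1/2 -> teqv X p q.
Proof.
  induction 1 as [p q | p q p' q' r hqp' hc IH]; intro hr.
  - destruct (dprod_ddisc_cases X p q) as [-> | hpq]; [apply rst_refl | lra].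
  - pose proof (chain_ddisc_nonneg X p' q' r hc).
    destruct (dprod_ddisc_cases X p q) as [<- | hpq]; [| lra].
    pose proof (dprod_ddisc_nonneg X p p).
    apply rst_trans with p'; [exact hqp' | apply IH; lra].
Qed.

Lemma tens_eq (X : TSet) (s t : tens X) p q :
  proj1_sig s p -> proj1_sig t q -> teqv X p q -> s = t.
Proof.
  destruct s as [S [p0 ->]], t as [T [q0 ->]]; simpl; intros hp hq hpq.
  apply eq_sig_hprop; [intros; apply proof_irrelevance |]; simpl.
  apply functional_extensionality; intro z; apply propositional_extensionality.
  split; intro hz.
  - apply rst_trans with q; [exact hq |].
    apply rst_trans with p; [apply rst_sym; exact hpq |].
    apply rst_trans with p0; [apply rst_sym; exact hp | exact hz].
  - apply rst_trans with p; [exact hp |].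
    apply rst_trans with q; [exact hpq |].
    apply rst_trans with q0; [apply rst_sym; exact hq | exact hz].
Qed.

Lemma tens_inhabited (X : TSet) (s : tens X) : exists p, proj1_sig s p.
Proof. destruct s as [S [p0 ->]]; exists p0; apply rst_refl. Qed.

Lemma qdist_ddisc_separated (X : TSet) (s t : tens X) :
  s <> t -> 1/2 <= qdist X (ddisc X) s t.
Proof.
  intro hst; unfold qdist.
  set (E := fun r => exists p q,
              proj1_sig s p /\ proj1_sig t q /\ chain X (ddisc X) p q r).
  destruct (Glb_Rbar_correct E) as [hlb hglb].
  assert (hhalf : Rbar_le (1/2) (Glb_Rbar E)).
  { apply hglb; intros r (p & q & hp & hq & hc); simpl.
    destruct (Rlt_or_le r (1/2)) as [hr | hr]; [| exact hr].
    exfalso; apply hst; eapply tens_eq; eauto using chain_ddisc_short_teqv. }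
  destruct (tens_inhabited X s) as [p hp], (tens_inhabited X t) as [q hq].
  assert (hE : E (dprod X (ddisc X) p q)) by (exists p, q; auto using ch_one).
  specialize (hlb _ hE).
  destruct (Glb_Rbar E); simpl in *; [exact hhalf | contradiction | contradiction].
Qed.

Lemma met3_alg_ddisc (G : TSet) (g : tens G -> G) :
  set3_alg G g -> met3_alg G (ddisc G) g.
Proof.
  intro hg; split; [apply is_tmet_ddisc | split; [exact hg |]].
  apply mcont_of_separated with (c := 1/2); [lra | apply qdist_ddisc_separated |].
  intro y; apply (proj1 (is_tmet_ddisc G)); reflexivity.
Qed.

Lemma met3_hom_ddisc_iff (G : TSet) (g : tens G -> G)
  (A : TSet) (dA : A -> A -> R) (alpha : tens A -> A) (h : G -> A) :
  is_tmet A dA ->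
  met3_hom G (ddisc G) g A dA alpha h <-> set3_hom G g A alpha h.
Proof.
  intro hA; split; [intros [hh _]; exact hh |].
  intro hh; split; [exact hh |].
  apply mcont_ddisc; intro y; apply (proj1 hA); reflexivity.
Qed.

Theorem mainTheorem3 (G : TSet) (g : tens G -> G) :
  set3_initial G g ->
  met3_initial G (ddisc G) g /\
  (forall (A : TSet) (dA : A -> A -> R) (alpha : tens A -> A),
     met3_alg A dA alpha ->
     forall h : G -> A,
       met3_hom G (ddisc G) g A dA alpha h <-> set3_hom G g A alpha h).
Proof.
  intros [hg huniv].
  assert (hhom : forall (A : TSet) (dA : A -> A -> R) (alpha : tens A -> A),
             met3_alg A dA alpha -> forall h : G -> A,
             met3_hom G (ddisc G) g A dA alpha h <-> set3_hom G g A alpha h)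
    by (intros A dA alpha [hA _] h; exact (met3_hom_ddisc_iff G g A dA alpha h hA)).
  split; [split; [exact (met3_alg_ddisc G g hg) |] | exact hhom].
  intros A dA alpha hA.
  destruct (huniv A alpha (proj1 (proj2 hA))) as [h [hh hunique]].
  exists h; split.
  - apply (hhom A dA alpha hA); exact hh.
  - intros h' hh'; apply hunique, (hhom A dA alpha hA), hh'.
Qed.
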